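(* For every integer $h \geq 3$, \[ \frac{\sin\bigl(\pi\sqrt{3/h}\bigr)}{\pi\sqrt{3/h}} < \left( \frac{4}{3 - \cos(\pi/h)} - 1 \right)^h . \] Consequently $x_h < \pi\sqrt{3/h}$ for all $h \geq 3$, where $x_h$ is the unique real number in $(0,\pi)$ with $\frac{\sin x_h}{x_h} = \left( \frac{4}{3-\cos(\pi/h)} - 1\right)^h$. *)

From Stdlib Require Import Reals.
Open Scope R_scope.

Definition rhs_h (h : nat) : R := (4 / (3 - cos (PI / INR h)) - 1) ^ h.

Definition bound_h (h : nat) : R := PI * sqrt (3 / INR h).

From Stdlib Require Import Reals Lra Lia Psatz.
From Coquelicot Require Import Coquelicot.
Open Scope R_scope.

(* Write H = h, e = 1/H and a = pi^2/H, so that bound_h h = sqrt (3 a).  By the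
   Taylor bound on sine, sin(sqrt(3a))/sqrt(3a) <= 1 - a/2 + 3a^2/40.  On the
   other side cos(pi/H) >= 1 - D with D the sixth-order cosine defect of
   s = (pi/H)^2, so the base of rhs_h h is at least 1 - U with U = 2D/(2+D), and
   the third-order Bernoulli inequality bounds (1 - U)^H from below by a cubic in
   m = H U.  Since m falls short of a/2 by about e a^2/6, this cubic beats
   1 - a/2 + 3a^2/40 once e <= 1/4 and 9 <= pi^2 <= 10.24; the case h = 3 is
   exact, as sin pi = 0.  The consequence for x_h holds because sin x / x is
   strictly decreasing on (0, pi). *)

Lemma sin_le_taylor5 y : 0 <= y <= PI -> sin y <= y - y^3/6 + y^5/120.
Proof.
  intros [hy0 hyPI]; destruct (sin_bound y 0 hy0 hyPI) as [_ hub].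
  unfold sin_approx, sin_term in hub; simpl in hub; lra.
Qed.

Lemma cos_ge_taylor6 t : - PI/2 <= t <= PI/2 -> 1 - t^2/2 + t^4/24 - t^6/720 <= cos t.
Proof.
  intros [ht0 ht1]; destruct (cos_bound t 1 ht0 ht1) as [hlb _].
  unfold cos_approx, cos_term in hlb; cbn [sum_f_R0 Nat.mul Nat.add] in hlb.
  replace (INR (Factorial.fact 6)) with 720 in hlb by (rewrite INR_IZR_INZ; reflexivity).
  simpl in hlb; lra.
Qed.

Lemma cos_le_taylor8 t : - PI/2 <= t <= PI/2 ->
  cos t <= 1 - t^2/2 + t^4/24 - t^6/720 + t^8/40320.
Proof.
  intros [ht0 ht1]; destruct (cos_bound t 1 ht0 ht1) as [_ hub].
  unfold cos_approx, cos_term in hub; cbn [sum_f_R0 Nat.mul Nat.add] in hub.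
  replace (INR (Factorial.fact 8)) with 40320 in hub by (rewrite INR_IZR_INZ; reflexivity).
  replace (INR (Factorial.fact 6)) with 720 in hub by (rewrite INR_IZR_INZ; reflexivity).
  simpl in hub; lra.
Qed.

Lemma PI_gt_3 : 3 < PI.
Proof. pose proof PI2_3_2; lra. Qed.

(* cos (8/5) < 0 by the Taylor bound, so 8/5 cannot lie below pi/2. *)
Lemma PI_le_16_5 : PI <= 16/5.
Proof.
  destruct (Rle_lt_dec PI (16/5)) as [hle | hgt]; [exact hle | exfalso].
  pose proof (cos_gt_0 (8/5) ltac:(lra) ltac:(lra)).
  pose proof (cos_le_taylor8 (8/5) ltac:(lra)); lra.
Qed.

Lemma PI_sqr_bounds : 9 <= PI^2 <= 1024/100.
Proof. pose proof PI_gt_3; pose proof PI_le_16_5; simpl; nra. Qed.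

Lemma x_cos_lt_sin x : 0 < x < PI -> x * cos x < sin x.
Proof.
  intros [hx0 hxPI].
  destruct (MVT_cor2 (fun z => z * cos z - sin z) (fun z => - (z * sin z)) 0 x hx0)
    as [c [hmvt [hc0 hcx]]].
  { intros z _; apply is_derive_Reals; auto_derive; [exact I | ring]. }
  rewrite cos_0, sin_0 in hmvt.
  assert (0 < c * sin c) by (apply Rmult_lt_0_compat; [lra | apply sin_gt_0; lra]).
  nra.
Qed.

Lemma sinc_decreasing b x : 0 < b -> b < x -> x < PI -> sin x / x < sin b / b.
Proof.
  intros hb hbx hxPI.
  destruct (MVT_cor2 (fun z => sin z / z) (fun z => (z * cos z - sin z) / z^2) b x hbx)
    as [c [hmvt [hbc hcx]]].
  { intros z hz; apply is_derive_Reals; auto_derive; [lra | field; lra]. }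
  assert (hneg : (c * cos c - sin c) / c^2 < 0).
  { apply Rdiv_neg_pos; [pose proof (x_cos_lt_sin c ltac:(lra)); lra | apply pow_lt; lra]. }
  nra.
Qed.

Lemma sinc_le_taylor4 y : 0 < y <= PI -> sin y / y <= 1 - y^2/6 + y^4/120.
Proof.
  intros hy; pose proof (sin_le_taylor5 y ltac:(lra)).
  apply Rle_trans with ((y - y^3/6 + y^5/120) / y).
  - apply Rmult_le_compat_r; [left; apply Rinv_0_lt_compat |]; lra.
  - right; field; lra.
Qed.

Lemma sinc_bound_h_le h : (3 <= h)%nat ->
  sin (bound_h h) / bound_h h <= 1 - (PI^2 / INR h)/2 + 3 * (PI^2 / INR h)^2 / 40.
Proof.
  intros hh.
  assert (hH : 3 <= INR h) by (replace 3 with (INR 3) by (simpl; lra); apply le_INR; lia).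
  assert (hq : 0 < 3 / INR h <= 1) by (split; [apply Rdiv_lt_0_compat | apply (Rdiv_le_1 3 (INR h))]; lra).
  assert (hsqrt : sqrt (3 / INR h)^2 = 3 / INR h) by (apply pow2_sqrt; lra).
  assert (hsqrt_pos : 0 < sqrt (3 / INR h)) by (apply sqrt_lt_R0; lra).
  assert (hsqrt_le1 : sqrt (3 / INR h) <= 1)
    by (rewrite <- sqrt_1; apply sqrt_le_1_alt; lra).
  assert (hsq : bound_h h ^ 2 = 3 * (PI^2 / INR h)).
  { unfold bound_h; rewrite Rpow_mult_distr, hsqrt; field; lra. }
  pose proof PI_gt_3.
  assert (hy : 0 < bound_h h <= PI) by (unfold bound_h; split; nra).
  pose proof (sinc_le_taylor4 _ hy) as hsinc.
  replace (bound_h h ^ 4) with ((bound_h h ^ 2)^2) in hsinc by ring.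
  rewrite hsq in hsinc; lra.
Qed.

Definition cos_defect (s : R) : R := s/2 - s^2/24 + s^3/720.

Definition defect_ratio (s : R) : R := 2 * cos_defect s / (2 + cos_defect s).

Lemma cos_ge_1_minus_defect t : - PI/2 <= t <= PI/2 -> 1 - cos_defect (t^2) <= cos t.
Proof.
  intros ht; pose proof (cos_ge_taylor6 t ht); unfold cos_defect.
  replace ((t^2)^2) with (t^4) by ring; replace ((t^2)^3) with (t^6) by ring; lra.
Qed.

Lemma cos_defect_bounds s : 0 <= s <= 1 -> 0 <= cos_defect s <= s/2.
Proof. intros hs; unfold cos_defect; split; nra. Qed.

Lemma defect_ratio_bounds s : 0 <= s <= 1 -> 0 <= defect_ratio s <= 1.
Proof.
  intros hs; pose proof (cos_defect_bounds s hs); unfold defect_ratio.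
  split; [apply Rdiv_le_0_compat | apply (Rdiv_le_1 (2 * cos_defect s))]; lra.
Qed.

Lemma defect_ratio_le s : 0 < s <= 64/100 ->
  defect_ratio s <= s/2 - s^2 * (1/3 - 17*s/720) * (1/2 - s/8).
Proof.
  intros hs; pose proof (cos_defect_bounds s ltac:(lra)) as [hD0 hD1].
  unfold defect_ratio; set (D := cos_defect s) in *.
  assert (hgap : s/2 - 2*D/(2+D) = (2*s^2/3 - 17*s^3/360 + s^4/720) / (2*(2+D)))
    by (unfold D, cos_defect; field; nra).
  assert (hinv : (1/2) * (1/2 - s/8) <= / (2*(2+D))).
  { apply Rmult_le_reg_r with (2*(2+D)); [lra |]. rewrite Rinv_l by lra. nra. }
  assert (hnum : 2 * (s^2/3 - 17*s^3/720) <= 2*s^2/3 - 17*s^3/360 + s^4/720) by nra.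
  assert (s^2 * (1/3 - 17*s/720) * (1/2 - s/8)
          <= (2*s^2/3 - 17*s^3/360 + s^4/720) * / (2*(2+D))).
  { apply Rle_trans with ((2 * (s^2/3 - 17*s^3/720)) * ((1/2) * (1/2 - s/8))); [nra |].
    apply Rmult_le_compat; nra. }
  unfold Rdiv in hgap |- *; lra.
Qed.

Lemma rhs_h_ge h : (4 <= h)%nat -> (1 - defect_ratio ((PI / INR h)^2))^h <= rhs_h h.
Proof.
  intros hh.
  assert (hH : 4 <= INR h) by (replace 4 with (INR 4) by (simpl; lra); apply le_INR; lia).
  pose proof PI_gt_3; pose proof PI_le_16_5.
  assert (ht : 0 <= PI / INR h <= PI/2).
  { split; [apply Rdiv_le_0_compat; lra |].
    apply Rmult_le_compat_l; [lra | apply Rinv_le_contravar; lra]. }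
  assert (hs : 0 <= (PI / INR h)^2 <= 1).
  { split; [apply pow2_ge_0 |]. assert (PI / INR h <= 1) by (apply (Rdiv_le_1 PI (INR h)); lra). nra. }
  pose proof (cos_ge_1_minus_defect (PI / INR h) ltac:(lra)) as hcosD.
  pose proof (COS_bound (PI / INR h)) as [_ hcos1].
  pose proof (defect_ratio_bounds _ hs) as hU.
  unfold rhs_h; apply pow_incr; split; [lra |].
  unfold defect_ratio in *; set (D := cos_defect ((PI / INR h)^2)) in *.
  replace (1 - 2*D/(2+D)) with (4/(2+D) - 1) by (field; lra).
  apply Rplus_le_compat_r, Rmult_le_compat_l; [lra |].
  apply Rinv_le_contravar; lra.
Qed.

Lemma falling_factorial3_nonneg n : 0 <= INR n * (INR n - 1) * (INR n - 2).
Proof.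
  destruct n as [| [| [| n]]]; [simpl; lra .. |].
  pose proof (pos_INR n); rewrite !S_INR.
  assert (0 <= (INR n + 1 + 1 + 1) * (INR n + 1 + 1 + 1 - 1)) by nra. nra.
Qed.

Lemma pow_1_minus_ge_cubic n u : 0 <= u <= 1 ->
  1 - INR n * u + INR n * (INR n - 1) / 2 * u^2
    - INR n * (INR n - 1) * (INR n - 2) / 6 * u^3 <= (1 - u)^n.
Proof.
  intros hu; induction n as [| n IH]; [simpl; lra |].
  rewrite S_INR; change ((1 - u)^(S n)) with ((1 - u) * (1 - u)^n).
  set (P := 1 - INR n * u + INR n * (INR n - 1) / 2 * u^2
            - INR n * (INR n - 1) * (INR n - 2) / 6 * u^3) in IH.
  (* Multiplying the bound for n by 1 - u gives the bound for n + 1 plus a u^4 term. *)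
  assert (hstep : 1 - (INR n + 1) * u + (INR n + 1) * (INR n + 1 - 1) / 2 * u^2
                  - (INR n + 1) * (INR n + 1 - 1) * (INR n + 1 - 2) / 6 * u^3
                  = (1 - u) * P - INR n * (INR n - 1) * (INR n - 2) / 6 * u^4)
    by (unfold P; field).
  rewrite hstep.
  assert (0 <= INR n * (INR n - 1) * (INR n - 2) / 6 * u^4).
  { apply Rmult_le_pos; [pose proof (falling_factorial3_nonneg n); lra | apply pow_le; lra]. }
  assert ((1 - u) * P <= (1 - u) * (1 - u)^n) by (apply Rmult_le_compat_l; lra).
  lra.
Qed.

Section CubicMargin.

Variables e a : R.
Hypothesis he : 0 < e <= 1/4.
Hypothesis ha : 9 * e <= a <= 1024/100 * e.

Let C1 := 1 - (1-e)*a/2 + (1-e)*(1-2*e)*a*a/8.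

Lemma cubic_margin_C1_ge : 1/4 <= C1.
Proof.
  unfold C1.
  assert (0 <= (1-2*e) * ((1-e)*a/2 - (1-e)/(1-2*e))^2)
    by (apply Rmult_le_pos; [lra | apply pow2_ge_0]).
  assert (hq : (1-e)/(1-2*e) <= 3/2)
    by (apply Rmult_le_reg_r with (1-2*e); [lra | field_simplify; lra]).
  assert (hsq : (1-2*e) * ((1-e)*a/2 - (1-e)/(1-2*e))^2
                = (1-e)^2*(1-2*e)*a^2/4 - (1-e)^2*a + (1-e)*((1-e)/(1-2*e)))
    by (field; lra).
  assert ((1-e)*((1-e)/(1-2*e)) <= (1-e)*(3/2)) by (apply Rmult_le_compat_l; lra).
  nra.
Qed.

Let w := e * (1/3 - 17*a*e/720) * (1/2 - e*a/8).

Lemma cubic_margin_leading_pos :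
  0 < (1-e)/8 - 3/40 - (1-e)*(1-2*e)*a/48 + w * C1.
Proof.
  pose proof cubic_margin_C1_ge as hC1; unfold w.
  destruct he as [he0 he1]; destruct ha as [ha0 ha1].
  assert (hae : a*e <= 64/100) by nra.
  assert (hw : e * (318/1000 * (42/100)) <= e * (1/3 - 17*a*e/720) * (1/2 - e*a/8)).
  { rewrite Rmult_assoc; apply Rmult_le_compat_l; [lra |]. apply Rmult_le_compat; lra. }
  assert (0 <= e * (318/1000 * (42/100))) by lra.
  assert (e * (318/1000 * (42/100)) * (1/4) <= e * (1/3 - 17*a*e/720) * (1/2 - e*a/8) * C1)
    by (apply Rmult_le_compat; lra).
  assert ((1-e)*(1-2*e)*a/48 <= (1-e)*(1-2*e)*(1024/100*e)/48).
  { assert (0 <= (1-e)*(1-2*e)) by nra. nra. }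
  nra.
Qed.

Lemma cubic_margin m : a^2 * w <= a/2 - m ->
  1 - a/2 + 3*a^2/40 < 1 - m + (1-e)*m^2/2 - (1-e)*(1-2*e)*m^3/6.
Proof.
  intros hm; set (eps := a/2 - m) in *.
  replace m with (a/2 - eps) by (unfold eps; field).
  set (C2 := (1-e)/2 - (1-e)*(1-2*e)*a/4).
  set (C3 := (1-e)*(1-2*e)/6).
  (* Around m = a/2 only the a^3 term is negative; the deficit eps >= a^2 w, weighted by
     C1 >= 1/4, compensates for it. *)
  assert (hexp : 1 - (a/2-eps) + (1-e)*(a/2-eps)^2/2 - (1-e)*(1-2*e)*(a/2-eps)^3/6
                 - (1 - a/2 + 3*a^2/40)
                 = a^2*((1-e)/8 - 3/40) - (1-e)*(1-2*e)*a^3/48 + eps*C1 + eps^2*C2 + eps^3*C3)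
    by (unfold C1, C2, C3; field).
  pose proof cubic_margin_C1_ge as hC1; pose proof cubic_margin_leading_pos as hlead.
  destruct he as [he0 he1]; destruct ha as [ha0 ha1].
  assert (hw : 0 <= w).
  { unfold w; assert (a*e <= 64/100) by nra.
    apply Rmult_le_pos; [apply Rmult_le_pos |]; lra. }
  assert (ha2 : 0 < a^2) by nra.
  assert (0 <= a^2 * w) by (apply Rmult_le_pos; lra).
  assert (hC2 : 0 <= C2) by (unfold C2; assert ((1-2*e)*a <= 2) by nra; nra).
  assert (hC3 : 0 <= C3) by (unfold C3; nra).
  assert (a^2 * w * C1 <= eps * C1) by (apply Rmult_le_compat_r; lra).
  assert (0 <= eps^2 * C2) by (apply Rmult_le_pos; [apply pow2_ge_0 | lra]).
  assert (0 <= eps^3 * C3) by (apply Rmult_le_pos; [apply pow_le |]; lra).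
  assert (0 < a^2 * ((1-e)/8 - 3/40 - (1-e)*(1-2*e)*a/48 + w * C1))
    by (apply Rmult_lt_0_compat; lra).
  nra.
Qed.

End CubicMargin.

Lemma sinc_taylor_lt_rhs_h h : (4 <= h)%nat ->
  1 - (PI^2 / INR h)/2 + 3 * (PI^2 / INR h)^2 / 40 < rhs_h h.
Proof.
  intros hh.
  assert (hH : 4 <= INR h) by (replace 4 with (INR 4) by (simpl; lra); apply le_INR; lia).
  pose proof PI_sqr_bounds as hPI.
  set (H := INR h) in *; set (e := / H); set (a := PI^2 / H).
  set (s := (PI / H)^2); set (U := defect_ratio s).
  assert (he : 0 < e <= 1/4).
  { split; [apply Rinv_0_lt_compat; lra |].
    replace (1/4) with (/4) by field; apply Rinv_le_contravar; lra. }
  assert (hae : a = PI^2 * e) by (unfold a, e; field; lra).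
  assert (ha : 9 * e <= a <= 1024/100 * e) by (rewrite hae; split; apply Rmult_le_compat_r; lra).
  assert (hs : s = a * e) by (unfold s, a, e; field; lra).
  assert (hs1 : 0 < s <= 64/100) by (rewrite hs; split; nra).
  assert (hU : 0 <= U <= 1) by (apply defect_ratio_bounds; lra).
  assert (hm : a^2 * (e * (1/3 - 17*a*e/720) * (1/2 - e*a/8)) <= a/2 - H * U).
  { pose proof (defect_ratio_le s hs1) as hle.
    replace (a^2 * (e * (1/3 - 17*a*e/720) * (1/2 - e*a/8)))
      with (H * (s^2 * (1/3 - 17*s/720) * (1/2 - s/8))) by (rewrite hs; unfold e; field; lra).
    replace (a/2 - H * U) with (H * (s/2 - U)) by (rewrite hs; unfold e; field; lra).
    fold U in hle; apply Rmult_le_compat_l; lra. }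
  pose proof (cubic_margin e a he ha (H * U) hm) as hcubic.
  pose proof (pow_1_minus_ge_cubic h U hU) as hbern.
  pose proof (rhs_h_ge h hh) as hrhs.
  replace (1 - H * U + (1-e)*(H * U)^2/2 - (1-e)*(1-2*e)*(H * U)^3/6)
    with (1 - H * U + H * (H - 1) / 2 * U^2 - H * (H - 1) * (H - 2) / 6 * U^3)
    in hcubic by (unfold e; field; lra).
  fold H in hbern, hrhs; fold s in hrhs; fold U in hrhs; lra.
Qed.

Theorem mainTheorem8 : forall h : nat, (3 <= h)%nat ->
  sin (bound_h h) / bound_h h < rhs_h h /\
  (forall x : R, 0 < x < PI -> sin x / x = rhs_h h -> x < bound_h h).
Proof.
  intros h hh.
  assert (hsinc : sin (bound_h h) / bound_h h < rhs_h h).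
  { destruct (Nat.eq_dec h 3) as [-> | hne].
    - unfold bound_h, rhs_h; replace (INR 3) with 3 by (simpl; lra).
      replace (3 / 3) with 1 by field.
      rewrite sqrt_1, Rmult_1_r, sin_PI, cos_PI3, Rdiv_0_l.
      apply pow_lt; lra.
    - pose proof (sinc_bound_h_le h hh); pose proof (sinc_taylor_lt_rhs_h h ltac:(lia)); lra. }
  split; [exact hsinc |].
  intros x hx hxh.
  assert (hb : 0 < bound_h h).
  { assert (3 <= INR h) by (replace 3 with (INR 3) by (simpl; lra); apply le_INR; lia).
    unfold bound_h; pose proof PI_gt_3.
    apply Rmult_lt_0_compat, sqrt_lt_R0, Rdiv_lt_0_compat; lra. }
  destruct (Rlt_or_le x (bound_h h)) as [hlt | [hgt | heq]]; [exact hlt | exfalso ..].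
  - pose proof (sinc_decreasing (bound_h h) x hb hgt ltac:(lra)); lra.
  - rewrite heq in hsinc; lra.
Qed.
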